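(* Let $\mathbf B$ be a basic algebra over an algebraically closed field $\mathbbm k$ with $\mathbf B/\operatorname{rad}\mathbf B=\prod_{k=1}^m\bar{\mathbf B}_k$, $\bar{\mathbf B}_k\cong\mathbbm k$. (1) If $\mathbf A$ is obtained from $\mathbf B$ by gluing the components $\bar{\mathbf B}_i$ and $\bar{\mathbf B}_j$, then $\mathbf A$ is basic, $\mathbf A/\operatorname{rad}\mathbf A=\bar{\mathbf A}_{ij}\times\prod_{k\notin\{i,j\}}\bar{\mathbf B}_k$ where $\bar{\mathbf A}_{ij}=\{(\lambda,\lambda):\lambda\in\mathbbm k\}\subset\bar{\mathbf B}_i\times\bar{\mathbf B}_j$, $\operatorname{rad}\mathbf A=\operatorname{rad}\mathbf B$, and $\mathbf B\otimes_{\mathbf A}\bar{\mathbf A}_{ij}\cong\bar{\mathbf B}_i\times\bar{\mathbf B}_j$. (2) If $\mathbf A$ is obtained from $\mathbf B$ by blowing up the component $\bar{\mathbf B}_i$, then $\mathbf A$ is basic, $\mathbf A/\operatorname{rad}\mathbf A=\bar{\mathbf A}_{i1}\times\bar{\mathbf A}_{i2}\times\prod_{k\ne i}\bar{\mathbf B}_k$ where $\bar{\mathbf A}_{is}=\{\lambda e_{ss}:\lambda\in\mathbbm k\}$ and $e_{ss}$ ($s\in\{1,2\}$) are the diagonal matrix units of $\bar{\mathbf B}'_i\cong\mathrm{Mat}(2,\mathbbm k)$; moreover $\operatorname{rad}\mathbf A=\operatorname{rad}\mathbf B'$ and $\mathbf B'\otimes_{\mathbf A}\bar{\mathbf A}_{is}\cong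 V$, where $V$ is the simple $\bar{\mathbf B}'_i$-module.
   Context: Gluing: the algebra obtained from $\mathbf B$ by gluing $\bar{\mathbf B}_i,\bar{\mathbf B}_j$ ($i\ne j$) is the preimage in $\mathbf B$ of $\{(\lambda_1,\dots,\lambda_m)\in\mathbf B/\operatorname{rad}\mathbf B:\lambda_i=\lambda_j\}$. Blowing up: let $\mathbf B_k$ be the indecomposable right projective $\mathbf B$-modules corresponding to $\bar{\mathbf B}_k$, $P=2\mathbf B_i\oplus\bigoplus_{k\ne i}\mathbf B_k$, $\mathbf B'=\operatorname{End}_{\mathbf B}P$, $\mathbf B'/\operatorname{rad}\mathbf B'=\prod_k\bar{\mathbf B}'_k$ with $\bar{\mathbf B}'_i\cong\mathrm{Mat}(2,\mathbbm k)$ and $\bar{\mathbf B}'_k\cong\mathbbm k$ ($k\ne i$); the algebra obtained by blowing up $\bar{\mathbf B}_i$ is the preimage in $\mathbf B'$ of the subalgebra of tuples $(b_1,\dots,b_m)$ with $b_i$ diagonal. The modules $\bar{\mathbf A}_{ij}$, $\bar{\mathbf A}_{is}$ are regarded as simple $\mathbf A$-modules. *)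

From HB Require Import structures.
From mathcomp Require Import all_boot all_algebra all_field.
Set Implicit Arguments.
Unset Strict Implicit.
Unset Printing Implicit Defensive.
Import GRing.Theory.
Local Open Scope ring_scope.

Section Algebras.
Variables (K : fieldType) (L : falgType K).

Definition is_ideal (S : {aspace L}) (J : {vspace L}) : bool :=
  [&& (J <= S)%VS, (S * J <= J)%VS & (J * S <= J)%VS].

Definition nilpotent_space (J : {vspace L}) : Prop :=
  exists n : nat, (J ^+ n)%VS = 0%VS.

Definition is_rad (S : {aspace L}) (R : {vspace L}) : Prop :=
  [/\ is_ideal S R, nilpotent_space R &
      forall J : {vspace L}, is_ideal S J -> nilpotent_space J -> (J <= R)%VS].

(* "S is basic and S / rad S = prod_{k in I} S_k with S_k = k", the
   identification being given by the family of characters chi: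
   x + rad S |-> (chi k x)_k is an isomorphism S / rad S ~ K^I of algebras. *)
Definition basic_decomp (S : {aspace L}) (I : finType)
    (chi : I -> 'Hom(L, K^o)) : Prop :=
  [/\ forall k, chi k (algid S) = 1 :> K,
      forall k, {in S &, forall x y, chi k (x * y) = (chi k x : K) * chi k y},
      forall lam : I -> K, exists2 x, x \in S & forall k, chi k x = lam k :> K
    & is_rad S (S :&: \bigcap_(k : I) lker (chi k))%VS ].

(* The subspace N of S spanned by the balancing relations  b a - psi(a) b
   (b in S, a in T), where T is a subalgebra of S and the simple
   T-module K is given by the character psi of T.  By definition of the
   balanced tensor product, S (x)_T K = S / N  as left S-modules. *)
Definition bal_tensor_ker (S T : {aspace L}) (psi : 'Hom(L, K^o))
    : {vspace L} :=
  (S * (linfun (fun a : L => a - (psi a : K) *: algid T) @: T))%VS.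

(* The left S-module S / N is isomorphic to the module K^d on which S
   acts through rho (column vectors). *)
Definition quot_module_iso (S : {aspace L}) (N : {vspace L}) (d : nat)
    (rho : L -> 'M[K]_d) : Prop :=
  exists f : 'Hom(L, 'cV[K]_d),
    [/\ forall v : 'cV[K]_d, exists2 x, x \in S & f x = v,
        forall x, x \in S -> (f x == 0) = (x \in N)
      & {in S &, forall b x, f (b * x) = rho b *m f x} ].

End Algebras.

(* P = 2 B_i (+) (+)_{k <> i} B_k is realised as the subspace of
   W = B^(m+1) of tuples w with w_a in e_(dbl a) B, where the index
   a : 'I_(m+1) is sent to the component dbl i a : 'I_m; the two copies
   of B_i are the indices  widen_ord i  and  ord_max. *)
Definition dbl (m : nat) (i : 'I_m) (a : 'I_m.+1) : 'I_m :=
  if unlift ord_max a is Some k then k else i.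

Definition idx1 (m : nat) (i : 'I_m) : 'I_m.+1 := widen_ord (leqnSn m) i.
Definition idx2 (m : nat) : 'I_m.+1 := ord_max.

Section BlowUp.
Variables (K : fieldType) (B : falgType K) (m : nat) (i : 'I_m)
          (e : 'I_m -> B).

Definition Wsp := {ffun 'I_m.+1 -> B}.

Definition ract (w : Wsp) (b : B) : Wsp := [ffun a => w a * b].

Definition inP (w : Wsp) : Prop := forall a, e (dbl i a) * w a = w a.
Definition inC (w : Wsp) : Prop := forall a, e (dbl i a) * w a = 0.

(* End_B(P), each endomorphism extended by 0 on the complement *)
Definition endB (f : 'End(Wsp)) : Prop :=
  [/\ forall w, inC w -> f w = 0,
      forall w, inP (f w)
    & forall w b, f (ract w b) = ract (f w) b].

(* identity of End_B(P): the projection onto P along the complement *)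
Definition projP : 'End(Wsp) :=
  linfun (fun w : Wsp => [ffun a => e (dbl i a) * w a] : Wsp).

Definition delta (b : 'I_m.+1) (x : B) : Wsp :=
  [ffun c => if c == b then x else 0].

(* the (a,b) Peirce entry of f in e_(dbl a) B e_(dbl b) = Hom_B(P_b, P_a) *)
Definition entry (a b : 'I_m.+1) (f : 'End(Wsp)) : B :=
  f (delta b (e (dbl i b))) a.

Definition is_End_of_P (L' : falgType K) (B' : {aspace L'})
    (phi : 'Hom(L', 'End(Wsp))) : Prop :=
  [/\ {in B' &, injective phi},
      forall x, x \in B' -> endB (phi x),
      forall f, endB f -> exists2 x, x \in B' & phi x = f,
      {in B' &, forall x y, phi (x * y) = (phi x \o phi y)%VF}
    & phi (algid B') = projP].

End BlowUp.

(* A nilpotent ideal is killed by every character, so the radical of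
   the glued algebra A = ker (chi_i - chi_j) is still rad B, the common kernel
   of all chi_k, and A / rad A is read off by the chi_k with chi_i = chi_j.
   B (x)_A k is computed by x |-> (chi_i x, chi_j x): the balancing relations
   b (a - chi_i a) span its kernel because every x with chi_i x = chi_j x = 0
   already lies in A.

   An element of B' = End_B(P) is a Peirce matrix with entries
   f_ab in e_a B e_b.  The matrices whose entries all lie in rad B form a
   nilpotent ideal; conversely a unit matrix moves any entry of an element of
   a nilpotent ideal to a diagonal corner, where it is nilpotent.  Hence
   rad B' is that ideal, the characters of A read off the diagonal entries
   modulo rad B, and B' (x)_A k_s is the s-th column of the 2 x 2 block of
   B' at i, modulo rad B. *)

From HB Require Import structures.
From mathcomp Require Import all_boot all_algebra all_field.
Import GRing.Theory.
Local Open Scope ring_scope.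

Set Implicit Arguments.
Unset Strict Implicit.
Unset Printing Implicit Defensive.

Lemma linfunE (K : fieldType) (aT rT : vectType K) (f : aT -> rT) :
  linear f -> linfun f =1 f.
Proof. by move=> lf; apply: (lfunE (HB.pack f (GRing.isLinear.Build K aT rT _ f lf))). Qed.

Section Radical.
Variables (K : fieldType) (L : falgType K).
Implicit Types (J : {vspace L}) (S : {aspace L}) (c : 'Hom(L, K^o)).

Lemma memvX J v n : v \in J -> v ^+ n \in (J ^+ n)%VS.
Proof.
move=> Jv; elim: n => [|n IH]; first by rewrite expr0 expv0 memv_line.
by rewrite exprS expvSl memv_mul.
Qed.

Lemma nilpotent_memv J v : nilpotent_space J -> v \in J -> exists n, v ^+ n.+1 = 0.
Proof.
case=> n Jn Jv; exists n; apply/eqP; rewrite -memv0 -(prod0v J) -Jn -expvSr.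
exact: memvX.
Qed.

Lemma memv_bigcapP (I : finType) (Us : I -> {vspace L}) x :
  reflect (forall k, x \in Us k) (x \in \bigcap_(k : I) Us k)%VS.
Proof.
rewrite memvE; apply: (iffP subv_bigcapP) => [Ux k | Ux k _]; last by rewrite -memvE.
by rewrite memvE; apply: Ux.
Qed.

Lemma memv_exprS S v n : v \in S -> v ^+ n.+1 \in S.
Proof. by move=> Sv; elim: n => [|n IH]; rewrite ?expr1 // exprSr memvM. Qed.

Lemma lfun_exprS S c v n :
  {in S &, forall x y, c (x * y) = (c x : K) * c y} -> v \in S ->
  c (v ^+ n.+1) = (c v : K) ^+ n.+1.
Proof.
move=> cM Sv; elim: n => [|n IH]; first by rewrite !expr1.
by rewrite exprSr cM ?memv_exprS // IH -exprSr.
Qed.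

Lemma nilpotent_sub_lker S c J :
  {in S &, forall x y, c (x * y) = (c x : K) * c y} ->
  (J <= S)%VS -> nilpotent_space J -> (J <= lker c)%VS.
Proof.
move=> cM JS nJ; apply/subvP=> v Jv; rewrite memv_ker.
have [n vn0] := nilpotent_memv nJ Jv.
have := lfun_exprS n cM (subvP JS _ Jv).
by rewrite vn0 linear0 => /esym/eqP; rewrite expf_eq0.
Qed.

Lemma is_rad_uniq S R1 R2 : is_rad S R1 -> is_rad S R2 -> R1 = R2.
Proof. by move=> [i1 n1 max1] [i2 n2 max2]; apply: subv_anti; rewrite max2 // max1. Qed.

Lemma is_rad_characters S (I : finType) (c : I -> 'Hom(L, K^o)) :
  (forall k, {in S &, forall x y, c k (x * y) = (c k x : K) * c k y}) ->
  nilpotent_space (S :&: \bigcap_(k : I) lker (c k))%VS ->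
  is_rad S (S :&: \bigcap_(k : I) lker (c k))%VS.
Proof.
move=> cM nR; have memR x : x \in S -> (forall k, c k x = 0) ->
    x \in (S :&: \bigcap_(k : I) lker (c k))%VS.
  by move=> Sx cx0; rewrite memv_cap Sx; apply/memv_bigcapP => k; rewrite memv_ker cx0.
have RS := capvSl S (\bigcap_(k : I) lker (c k)).
have R0 x k : x \in (S :&: \bigcap_(k : I) lker (c k))%VS -> c k x = 0.
  by case/memv_capP => _ /memv_bigcapP/(_ k); rewrite memv_ker => /eqP.
split => //.
  apply/and3P; split=> //; apply/prodvP => x y Hx Hy.
    have Sy := subvP RS _ Hy.
    by apply: memR => [|k]; rewrite ?memvM // cM // (R0 _ _ Hy) mulr0.
  have Sx := subvP RS _ Hx.
  by apply: memR => [|k]; rewrite ?memvM // cM // (R0 _ _ Hx) mul0r.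
move=> J /and3P[JS _ _] nJ; rewrite subv_cap JS; apply/subv_bigcapP => k _.
exact: nilpotent_sub_lker (cM k) JS nJ.
Qed.

End Radical.

Section BalancedTensor.
Variables (K : fieldType) (L : falgType K) (S T : {aspace L}) (psi : 'Hom(L, K^o)).
Hypothesis sTS : (T <= S)%VS.

Local Notation N := (bal_tensor_ker S T psi).

Lemma bal_shift_linear : linear (fun a : L => a - (psi a : K) *: algid T).
Proof. by move=> k x y; rewrite linearP scalerBr scalerA addrACA -opprD -scalerDl. Qed.

Lemma bal_tensor_ker_mul b a :
  b \in S -> a \in T -> b * (a - (psi a : K) *: algid T) \in N.
Proof.
move=> Sb Ta; apply: memv_mul => //.
by rewrite -[_ - _](linfunE bal_shift_linear) memv_img.
Qed.

Lemma bal_tensor_ker_psi0 a : a \in T -> psi a = 0 -> a \in N.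
Proof.
move=> Ta psia0; have := bal_tensor_ker_mul (memv_algid S) Ta.
by rewrite psia0 scale0r subr0 algidl // (subvP sTS).
Qed.

Lemma bal_tensor_ker_sub_lker d (f : 'Hom(L, 'cV[K]_d)) (rho : L -> 'M[K]_d) :
  {in S &, forall b x, f (b * x) = rho b *m f x} ->
  {in T, forall a, f a = (psi a : K) *: f (algid T)} ->
  (N <= lker f)%VS.
Proof.
move=> fM fT; apply/prodvP => b v Sb /memv_imgP[a Ta ->].
have Sa := subvP sTS _ Ta; have ST1 := subvP sTS _ (memv_algid T).
rewrite memv_ker (linfunE bal_shift_linear) fM ?memvB ?memvZ //.
by rewrite linearB linearZ /= fT // subrr mulmx0.
Qed.

Lemma quot_module_isoP d (f : 'Hom(L, 'cV[K]_d)) (rho : L -> 'M[K]_d) :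
  (forall v, exists2 x, x \in S & f x = v) ->
  {in S &, forall b x, f (b * x) = rho b *m f x} ->
  {in T, forall a, f a = (psi a : K) *: f (algid T)} ->
  (forall x, x \in S -> f x = 0 -> x \in N) ->
  quot_module_iso S N rho.
Proof.
move=> f_surj fM fT kerf; exists f; split=> // x Sx; apply/eqP/idP => [/(kerf x Sx) //|Nx].
by apply/eqP; rewrite -memv_ker; apply: (subvP (bal_tensor_ker_sub_lker fM fT)).
Qed.

End BalancedTensor.

Lemma ord2P (r : 'I_2) : r = 0 \/ r = 1.
Proof. by case: r => [[|[|r]] lt_r2] //; [left | right]; apply: val_inj. Qed.

Section Doubling.
Variables (m : nat) (i : 'I_m).

Lemma dbl_lift k : dbl i (lift ord_max k) = k.
Proof. by rewrite /dbl liftK. Qed.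

Lemma dbl_max : dbl i ord_max = i.
Proof. by rewrite /dbl unlift_none. Qed.

Lemma idx1E : idx1 i = lift ord_max i.
Proof. by apply: val_inj; rewrite /= /bump leqNgt ltn_ord. Qed.

Lemma idx1_neq_idx2 : idx1 i != idx2 m.
Proof. by rewrite -val_eqE /= ltn_eqF. Qed.

Lemma dbl_idx1 : dbl i (idx1 i) = i.
Proof. by rewrite idx1E dbl_lift. Qed.

Lemma dbl_idx2 : dbl i (idx2 m) = i.
Proof. exact: dbl_max. Qed.

Lemma dbl_eq_i a : (dbl i a == i) = (a == idx1 i) || (a == idx2 m).
Proof.
case: (unliftP ord_max a) => [k ->|->]; last by rewrite dbl_max /idx2 !eqxx orbT.
rewrite dbl_lift idx1E (inj_eq lift_inj) /idx2 (eq_sym _ ord_max).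
by rewrite (negbTE (neq_lift _ _)) orbF.
Qed.

Lemma dbl_eq_neq a b : dbl i a = dbl i b -> a != b ->
  (a == idx1 i) && (b == idx2 m) || (a == idx2 m) && (b == idx1 i).
Proof.
rewrite idx1E /idx2.
case: (unliftP ord_max a) => [k ->|->]; case: (unliftP ord_max b) => [l ->|->];
  rewrite ?dbl_lift ?dbl_max ?eqxx ?(inj_eq lift_inj) //=.
- by move=> ->; rewrite eqxx.
- by move=> ->; rewrite eqxx.
- by move=> <-; rewrite eqxx orbT.
Qed.

Definition ii (r : 'I_2) : 'I_m.+1 := if r == ord0 then idx1 i else idx2 m.

Lemma ii0 : ii 0 = idx1 i. Proof. by []. Qed.
Lemma ii1 : ii 1 = idx2 m. Proof. by []. Qed.

Lemma dbl_ii r : dbl i (ii r) = i.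
Proof. by case: (ord2P r) => ->; rewrite ?ii0 ?ii1 ?dbl_idx1 ?dbl_idx2. Qed.

Lemma ii_eq r r' : (ii r == ii r') = (r == r').
Proof.
have neq12 := idx1_neq_idx2.
case: (ord2P r) => ->; case: (ord2P r') => ->; rewrite ?ii0 ?ii1 ?eqxx //.
  by rewrite (negbTE neq12).
by rewrite eq_sym (negbTE neq12).
Qed.

Lemma sum_dbl_i (V : zmodType) (F : 'I_m.+1 -> V) :
  (forall c, dbl i c != i -> F c = 0) -> \sum_c F c = \sum_(r < 2) F (ii r).
Proof.
move=> F0; rewrite (bigID (fun c => dbl i c == i)) /= [X in _ + X]big1 ?addr0; last first.
  by move=> c /F0.
rewrite (bigD1 (ii 0)) ?dbl_ii //= (bigD1 (ii 1)) /=; last first.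
  by rewrite dbl_ii ii1 ii0 eqxx eq_sym idx1_neq_idx2.
rewrite big1 => [|c]; first by rewrite addr0 big_ord_recl big_ord1.
rewrite dbl_eq_i -ii0 -ii1.
by case/andP=> /andP[/orP[]/eqP-> ]; rewrite eqxx ?andbF.
Qed.

End Doubling.

Section Basic.
Variables (K : fieldType) (B : falgType K) (m : nat) (chi : 'I_m -> 'Hom(B, K^o)).
Hypothesis hB : basic_decomp {:B}%AS chi.

Lemma chiM k x y : chi k (x * y) = (chi k x : K) * chi k y.
Proof. by case: hB => _ chiM _ _; apply: chiM; rewrite memvf. Qed.

Lemma chi1 k : chi k 1 = 1 :> K.
Proof.
by case: hB => chi1 _ _ _; rewrite -(chi1 k); congr (chi k _); apply/esym/eqP;
  rewrite algid_eq1 memvf.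
Qed.

Lemma chi_surj (lam : 'I_m -> K) : exists x, forall k, chi k x = lam k.
Proof. by case: hB => _ _ chi_surj _; have [x _] := chi_surj lam; exists x. Qed.

Definition radB : {vspace B} := (fullv :&: \bigcap_(k : 'I_m) lker (chi k))%VS.

Lemma memv_radB x : (x \in radB) = [forall k, chi k x == 0].
Proof.
rewrite memv_cap memvf; apply/memv_bigcapP/forallP => chi0 k; last by rewrite memv_ker.
by rewrite -memv_ker.
Qed.

Lemma is_rad_radB : is_rad {:B}%AS radB.
Proof. by case: hB. Qed.

Section Gluing.
Variables (i j : 'I_m) (A : {aspace B}).
Hypotheses (neq_ij : i != j) (defA : (A : {vspace B}) = lker (chi i - chi j)).

Lemma memv_glued x : (x \in A) = (chi i x == chi j x :> K).
Proof. by rewrite defA memv_ker !lfun_simp subr_eq0. Qed.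

Lemma algid_glued : algid A = 1.
Proof. by apply/eqP; rewrite algid_eq1 memv_glued !chi1. Qed.

Lemma glued_rad :
  (A :&: \bigcap_(k : {k : 'I_m | k != j}) lker (chi (val k)))%VS = radB.
Proof.
apply/vspaceP => x; rewrite memv_radB memv_cap memv_glued.
apply/andP/forallP => [[/eqP chiij /memv_bigcapP chi0] k | chi0].
  have chi0' (l : 'I_m) : l != j -> chi l x == 0.
    by move=> neq_lj; have := chi0 (exist _ l neq_lj); rewrite memv_ker.
  by case: (eqVneq k j) => [->|/chi0' //]; rewrite -chiij chi0'.
rewrite (eqP (chi0 i)) (eqP (chi0 j)); split=> //.
by apply/memv_bigcapP => k; rewrite memv_ker chi0.
Qed.

Lemma glued_basic_decomp :
  basic_decomp A (fun k : {k : 'I_m | k != j} => chi (val k)).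
Proof.
pose i0 : {k : 'I_m | k != j} := exist _ i neq_ij.
have i0E k : (k == i) || (k == j) -> insubd i0 k = i0.
  by case/orP=> /eqP->; apply: val_inj; rewrite val_insubd ?neq_ij ?eqxx.
split=> [k | k x y _ _ | lam |]; rewrite ?algid_glued ?chi1 ?chiM //.
  have [x chi_x] := chi_surj (fun k => lam (insubd i0 k)).
  exists x => [|k]; rewrite ?memv_glued !chi_x; last by rewrite valKd.
  by rewrite !i0E ?eqxx ?orbT.
apply: is_rad_characters => [k x y _ _|]; first exact: chiM.
by rewrite glued_rad; case: is_rad_radB.
Qed.

Lemma is_rad_glued R : is_rad {:B}%AS R -> is_rad A R.
Proof.
move/is_rad_uniq/(_ is_rad_radB)->; rewrite -glued_rad.
by case: glued_basic_decomp.
Qed.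

Definition glued_col (x : B) : 'cV[K]_2 :=
  \col_r (if r == ord0 then chi i x else chi j x : K).

Lemma glued_col_linear : linear glued_col.
Proof. by move=> k x y; apply/matrixP => r c; rewrite !mxE; case: ifP; rewrite linearP. Qed.

Lemma glued_tensor :
  quot_module_iso {:B}%AS (bal_tensor_ker {:B}%AS A (chi i))
    (fun b : B => diag_mx (\row_(r < 2)
       (if r == ord0 then (chi i b : K) else (chi j b : K)))).
Proof.
have colE := linfunE glued_col_linear.
apply: (quot_module_isoP (subvf A) (f := linfun glued_col)) => [v | b x _ _ | a | x _].
- have [x chi_x] := chi_surj (fun k => if k == i then v 0 0 else v 1 0).
  exists x; rewrite ?memvf // colE; apply/matrixP => r c.
  by rewrite !mxE !chi_x ord1 eqxx (eq_sym j) (negbTE neq_ij); case: (ord2P r) => ->.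
- by apply/matrixP => r c; rewrite !colE mul_diag_mx !mxE !chiM; case: ifP.
- rewrite memv_glued => /eqP chi_ij; apply/matrixP => r c.
  by rewrite !colE !mxE algid_glued !chi1 -chi_ij; case: ifP; rewrite mulr1.
- rewrite colE => /matrixP chi0; have := chi0 0 0; have := chi0 1 0.
  rewrite !mxE /= => chij0 chii0.
  have sAB : (A <= {:B}%AS)%VS := subvf A.
  by apply: (bal_tensor_ker_psi0 sAB); rewrite ?memv_glued chii0 ?chij0.
Qed.

End Gluing.

Section BlowUp.
Variables (i : 'I_m) (e : 'I_m -> B).
Hypotheses (eM : forall k l, e k * e l = (if k == l then e k else 0))
           (che : forall k l, chi l (e k) = (k == l)%:R :> K).

Local Notation W := (Wsp B m).
Local Notation ek a := (e (dbl i a)).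

Lemma e_idem k : e k * e k = e k.
Proof. by rewrite eM eqxx. Qed.

Lemma chi_corner k y : chi k (e k * y * e k) = chi k y.
Proof. by rewrite !chiM che eqxx mul1r mulr1. Qed.

Lemma chi_corner_off l y k k' : k != k' -> chi l (e k * y * e k') = 0 :> K.
Proof.
move=> neq_kk'; rewrite !chiM !che; case: (eqVneq k l) => [<-|_]; last by rewrite !mul0r.
by rewrite (eq_sym k') (negbTE neq_kk') mulr0.
Qed.

Section EndB.
Variable f : 'End(W).
Hypothesis hf : endB i e f.

Lemma entry_idl a b : ek a * entry i e a b f = entry i e a b f.
Proof. by case: hf => _ fP _; apply: fP. Qed.

Lemma entry_idr a b : entry i e a b f * ek b = entry i e a b f.
Proof.
case: hf => _ _ fR; have ractE (w : W) y c : w c * y = ract w y c by rewrite ffunE.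
rewrite /entry ractE -fR.
by congr (f _ a); apply/ffunP => c; rewrite !ffunE; case: ifP; rewrite ?e_idem ?mul0r.
Qed.

(* Column expansion: w is split into its P-part, on which f acts through
   the Peirce entries, and its complement, which f kills. *)
Lemma endB_apply (w : W) a : f w a = \sum_b entry i e a b f * w b.
Proof.
case: hf => fC _ fR.
have wE : w = \sum_b delta b (w b).
  apply/ffunP => c; rewrite sum_ffunE (bigD1 c) //= big1 => [|b neq_bc].
    by rewrite ffunE eqxx addr0.
  by rewrite ffunE (eq_sym c) (negbTE neq_bc).
rewrite {1}wE linear_sum sum_ffunE; apply: eq_bigr => b _.
have -> : delta b (w b) = ract (delta b (ek b)) (w b) + delta b (w b - ek b * w b).
  apply/ffunP => c; rewrite !ffunE.
  by case: ifP; rewrite ?mul0r ?add0r // addrC subrK.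
rewrite linearD /= fR (fC (delta b (w b - ek b * w b))) ?addr0 ?ffunE //.
move=> c; rewrite ffunE; case: ifP => [/eqP ->|]; last by rewrite mulr0.
by rewrite mulrBr mulrA e_idem subrr.
Qed.

Lemma entry_comp (g : 'End(W)) a b :
  entry i e a b (f \o g)%VF = \sum_c entry i e a c f * entry i e c b g.
Proof. by rewrite /entry comp_lfunE endB_apply. Qed.

End EndB.

Lemma entry_linear a b : linear (entry i e a b).
Proof. by move=> k f g; rewrite /entry !lfun_simp !ffunE. Qed.

Lemma entry_projP a b : entry i e a b (projP i e) = if a == b then ek a else 0.
Proof.
rewrite /entry /projP linfunE ?ffunE; last first.
  by move=> k u v; apply/ffunP => c; rewrite !ffunE mulrDr scalerAr.
by case: ifP => [/eqP->|_]; rewrite ?e_idem ?mulr0.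
Qed.

Definition peirce_end (M : 'I_m.+1 -> 'I_m.+1 -> B) : 'End(W) :=
  linfun (fun w : W => [ffun c => \sum_b ek c * M c b * ek b * w b] : W).

Lemma peirce_endE M w c : peirce_end M w c = \sum_b ek c * M c b * ek b * w b.
Proof.
rewrite /peirce_end linfunE ?ffunE // => k u v; apply/ffunP => d.
rewrite !ffunE scaler_sumr -big_split; apply: eq_bigr => b _.
by rewrite !ffunE mulrDr scalerAr.
Qed.

Lemma peirce_end_endB M : endB i e (peirce_end M).
Proof.
split=> [w wC | w a | w y].
- by apply/ffunP => c; rewrite peirce_endE ffunE big1 // => b _; rewrite -mulrA wC mulr0.
- by rewrite !peirce_endE mulr_sumr; apply: eq_bigr => b _; rewrite !mulrA e_idem.
- apply/ffunP => c; rewrite ffunE !peirce_endE mulr_suml.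
  by apply: eq_bigr => b _; rewrite ffunE mulrA.
Qed.

Lemma entry_peirce_end M a b : entry i e a b (peirce_end M) = ek a * M a b * ek b.
Proof.
rewrite /entry peirce_endE (bigD1 b) //= big1 => [|c neq_cb].
  by rewrite ffunE eqxx -mulrA e_idem addr0.
by rewrite ffunE (negbTE neq_cb) mulr0.
Qed.

Definition unit_end (c d : 'I_m.+1) : 'End(W) :=
  peirce_end (fun p q => if (p == c) && (q == d) then 1 else 0).

Lemma unit_end_endB c d : endB i e (unit_end c d).
Proof. exact: peirce_end_endB. Qed.

Lemma entry_unit_end c d p q :
  entry i e p q (unit_end c d) = if (p == c) && (q == d) then ek c * ek d else 0.
Proof.
rewrite entry_peirce_end; case: ifP => [/andP[/eqP-> /eqP->]|_]; first by rewrite mulr1.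
by rewrite mulr0 mul0r.
Qed.

Lemma entry_unit_end_comp f c d p q : endB i e f -> dbl i c = dbl i d ->
  entry i e p q (unit_end c d \o f)%VF = if p == c then entry i e d q f else 0.
Proof.
move=> hf eq_cd; rewrite entry_comp; last exact: unit_end_endB.
case: (eqVneq p c) => [->|neq_pc]; last first.
  by rewrite big1 // => r _; rewrite entry_unit_end (negbTE neq_pc) mul0r.
rewrite (bigD1 d) //= big1 => [|r neq_rd]; last first.
  by rewrite entry_unit_end eqxx (negbTE neq_rd) mul0r.
by rewrite entry_unit_end !eqxx eq_cd e_idem entry_idl // addr0.
Qed.

Lemma entry_comp_unit_end f c d p q : endB i e f -> dbl i c = dbl i d ->
  entry i e p q (f \o unit_end c d)%VF = if q == d then entry i e p c f else 0.
Proof.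
move=> hf eq_cd; rewrite entry_comp //.
case: (eqVneq q d) => [->|neq_qd]; last first.
  by rewrite big1 // => r _; rewrite entry_unit_end (negbTE neq_qd) andbF mulr0.
rewrite (bigD1 c) //= big1 => [|r neq_rc]; last first.
  by rewrite entry_unit_end (negbTE neq_rc) mulr0.
by rewrite entry_unit_end !eqxx -eq_cd e_idem entry_idr // addr0.
Qed.

Section EndOfP.
Variables (L' : falgType K) (B' : {aspace L'}) (phi : 'Hom(L', 'End(W))).
Hypothesis hphi : is_End_of_P i e B' phi.

Local Notation E x a b := (entry i e a b (phi x)).
Implicit Types (U V : {vspace B}).

Lemma phi_endB x : x \in B' -> endB i e (phi x).
Proof. by case: hphi => _ phi_endB _ _ _; apply: phi_endB. Qed.

Lemma phi_surj f : endB i e f -> exists2 x, x \in B' & phi x = f.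
Proof. by case: hphi => _ _ phi_surj _ _; apply: phi_surj. Qed.

Lemma phiM x y : x \in B' -> y \in B' -> phi (x * y) = (phi x \o phi y)%VF.
Proof. by case: hphi => _ _ _ phiM _; apply: phiM. Qed.

Lemma phi_algid : phi (algid B') = projP i e.
Proof. by case: hphi. Qed.

Lemma entry_phiM x y a b : x \in B' -> y \in B' ->
  E (x * y) a b = \sum_c E x a c * E y c b.
Proof. by move=> Bx By; rewrite phiM // entry_comp //; apply: phi_endB. Qed.

Lemma entry_phi_eq0 x : x \in B' -> (forall a b, E x a b = 0) -> x = 0.
Proof.
case: hphi => phi_inj _ _ _ _ Bx Ex0; apply: phi_inj; rewrite ?mem0v // linear0.
apply/lfunP => w; apply/ffunP => a; rewrite endB_apply; last exact: phi_endB.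
by rewrite big1 ?lfunE ?ffunE // => b _; rewrite Ex0 mul0r.
Qed.

Lemma entry_phi_linear a b : linear (fun x => E x a b).
Proof. by move=> k x y; rewrite linearP /= entry_linear. Qed.

Lemma chi_entry_linear k a b : linear (fun x => chi k (E x a b) : K^o).
Proof. by move=> c x y; rewrite entry_phi_linear linearP. Qed.

Lemma chi_entry_off x a b l : x \in B' -> dbl i a != dbl i b -> chi l (E x a b) = 0 :> K.
Proof.
move=> Bx neq_ab; have hx := phi_endB Bx.
by rewrite -(entry_idl hx) -(entry_idr hx) mulrA chi_corner_off.
Qed.

Lemma chi_entry_l x a b l : x \in B' -> l != dbl i a -> chi l (E x a b) = 0 :> K.
Proof.
move=> Bx neq_la; rewrite -(entry_idl (phi_endB Bx)) chiM che.
by rewrite eq_sym (negbTE neq_la) mul0r.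
Qed.

Lemma entry_phi0 a b : E 0 a b = 0.
Proof. by rewrite -(linfunE (entry_phi_linear a b)) linear0. Qed.

Lemma entry_exprS z b y n : z \in B' ->
  (forall r, E z r b = if r == b then y else 0) -> E (z ^+ n.+1) b b = y ^+ n.+1.
Proof.
move=> Bz Ez; elim: n => [|n IH]; first by rewrite !expr1 Ez eqxx.
rewrite exprSr entry_phiM ?memv_exprS // (bigD1 b) //= big1 => [|r neq_rb].
  by rewrite Ez eqxx IH addr0 -exprSr.
by rewrite Ez (negbTE neq_rb) mulr0.
Qed.

Lemma entry_radB x a b : x \in B' ->
  (dbl i a = dbl i b -> chi (dbl i a) (E x a b) = 0) -> E x a b \in radB.
Proof.
move=> Bx chi0; rewrite memv_radB; apply/forallP => l; apply/eqP.
have [eq_ab|] := eqVneq (dbl i a) (dbl i b); last exact: chi_entry_off.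
have [->|] := eqVneq l (dbl i a); last exact: chi_entry_l.
exact: chi0.
Qed.

Definition peirce_sub (U : {vspace B}) : {vspace L'} :=
  (B' :&: \bigcap_(ab : 'I_m.+1 * 'I_m.+1) (linfun (fun x => E x ab.1 ab.2) @^-1: U))%VS.

Lemma peirce_subP U x :
  reflect (x \in B' /\ forall a b, E x a b \in U) (x \in peirce_sub U).
Proof.
have EE a b : linfun (fun x => E x a b) x = E x a b := linfunE (entry_phi_linear a b) x.
apply: (iffP memv_capP) => [[Bx /memv_bigcapP EU] | [Bx EU]]; split=> //.
  by move=> a b; have := EU (a, b); rewrite -memv_preim EE.
by apply/memv_bigcapP => -[a b]; rewrite -memv_preim EE.
Qed.

Lemma peirce_subS U V : (U <= V)%VS -> (peirce_sub U <= peirce_sub V)%VS.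
Proof.
move=> sUV; apply/subvP => x /peirce_subP[Bx EU]; apply/peirce_subP.
by split=> // a b; apply: (subvP sUV).
Qed.

Lemma peirce_sub_full : (B' <= peirce_sub fullv)%VS.
Proof. by apply/subvP => x Bx; apply/peirce_subP; split=> // a b; apply: memvf. Qed.

Lemma peirce_sub_mul U V x y :
  x \in peirce_sub U -> y \in peirce_sub V -> x * y \in peirce_sub (U * V).
Proof.
move=> /peirce_subP[Bx EU] /peirce_subP[By EV]; apply/peirce_subP.
split=> [|a b]; first exact: memvM.
by rewrite entry_phiM //; apply: memv_suml => c _; apply: memv_mul.
Qed.

Lemma peirce_sub_expv U n : (peirce_sub U ^+ n.+1 <= peirce_sub (U ^+ n.+1))%VS.
Proof.
elim: n => [|n IH]; first by rewrite !expv1.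
rewrite expvSr (expvSr U n.+1); apply/prodvP => x y Px Py.
exact: peirce_sub_mul (subvP IH _ Px) Py.
Qed.

Lemma nilpotent_peirce_sub U : nilpotent_space U -> nilpotent_space (peirce_sub U).
Proof.
case=> n Un; exists n.+1; apply/vspaceP => x; rewrite memv0.
apply/idP/eqP => [|->]; last exact: mem0v.
case/(subvP (peirce_sub_expv U n))/peirce_subP => Bx EU.
apply: entry_phi_eq0 => // a b; apply/eqP; rewrite -memv0.
by have := EU a b; rewrite expvSr Un prod0v.
Qed.

Lemma is_ideal_peirce_sub U : is_ideal {:B}%AS U -> is_ideal B' (peirce_sub U).
Proof.
case/and3P=> _ sBU sUB; apply/and3P; split; first exact: capvSl.
  apply/prodvP => x y Bx Uy; apply: (subvP (peirce_subS sBU)).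
  by apply: peirce_sub_mul Uy; apply: (subvP peirce_sub_full).
apply/prodvP => x y Ux By; apply: (subvP (peirce_subS sUB)).
by apply: peirce_sub_mul Ux _; apply: (subvP peirce_sub_full).
Qed.

(* For the (b,a) matrix unit u, the only nonzero entry in column b of u x is
   the (b,b)-entry y := E x a b, so (u x)^n has (b,b)-entry y^n: y is
   nilpotent along with u x. *)
Lemma ideal_sub_peirce_sub_radB J :
  is_ideal B' J -> nilpotent_space J -> (J <= peirce_sub radB)%VS.
Proof.
move=> /and3P[sJB sBJ _] nJ; apply/subvP => x Jx; have Bx := subvP sJB _ Jx.
apply/peirce_subP; split=> // a b; apply: entry_radB => // eq_ab.
have [u Bu phi_u] := phi_surj (unit_end_endB b a).
have Jux : u * x \in J by apply: (subvP sBJ); apply: memv_mul.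
have Eux r : E (u * x) r b = if r == b then E x a b else 0.
  by rewrite phiM // phi_u entry_unit_end_comp //; apply: phi_endB.
have [n uxn0] := nilpotent_memv nJ Jux.
have := entry_exprS n (subvP sJB _ Jux) Eux; rewrite uxn0 entry_phi0 => /esym Exn0.
have := lfun_exprS n (fun y z _ _ => chiM (dbl i a) y z) (memvf (E x a b)).
by rewrite Exn0 linear0 => /esym/eqP; rewrite expf_eq0 => /eqP.
Qed.

Lemma is_rad_peirce_sub_radB : is_rad B' (peirce_sub radB).
Proof.
case: is_rad_radB => iR nR _; split; first exact: is_ideal_peirce_sub.
  exact: nilpotent_peirce_sub.
exact: ideal_sub_peirce_sub_radB.
Qed.

Section BlownUp.
Variable A : {aspace L'}.
Hypothesis defA : forall x, x \in A =
  [&& x \in B', chi i (E x (idx1 i) (idx2 m)) == 0 & chi i (E x (idx2 m) (idx1 i)) == 0].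

Definition psi a := linfun (fun x : L' => (chi (dbl i a) (E x a a) : K^o)).

Lemma psiE a x : psi a x = chi (dbl i a) (E x a a).
Proof. exact: (linfunE (chi_entry_linear _ _ _) x). Qed.

Lemma subv_A_B' : (A <= B')%VS.
Proof. by apply/subvP => x; rewrite defA => /and3P[]. Qed.

Lemma chi_entry_A x a b : x \in A -> dbl i a = dbl i b -> a != b ->
  chi (dbl i a) (E x a b) = 0 :> K.
Proof.
rewrite defA => /and3P[_ /eqP E12 /eqP E21] eq_ab neq_ab.
by case/orP: (dbl_eq_neq eq_ab neq_ab) => /andP[/eqP-> /eqP->]; rewrite ?dbl_idx1 ?dbl_idx2.
Qed.

Lemma algid_A : algid A = algid B'.
Proof.
have A1 : algid B' \in A.
  rewrite defA memv_algid phi_algid !entry_projP (negbTE (idx1_neq_idx2 i)).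
  by rewrite (eq_sym (idx2 m)) (negbTE (idx1_neq_idx2 i)) linear0 eqxx.
by rewrite -{1}(algidr (subvP subv_A_B' _ (memv_algid A))) (algidl A1).
Qed.

Lemma psiM a : {in A &, forall x y, psi a (x * y) = (psi a x : K) * psi a y}.
Proof.
move=> x y Ax Ay; have Bx := subvP subv_A_B' _ Ax; have By := subvP subv_A_B' _ Ay.
rewrite !psiE entry_phiM // linear_sum (bigD1 a) //= big1 ?addr0 ?chiM // => c neq_ca.
rewrite chiM; have [eq_ac|neq_ac] := eqVneq (dbl i a) (dbl i c).
  by rewrite chi_entry_A // 1?eq_sym // mul0r.
by rewrite chi_entry_off // mul0r.
Qed.

Lemma psi_algid a : psi a (algid A) = 1 :> K.
Proof. by rewrite psiE algid_A phi_algid entry_projP eqxx che eqxx. Qed.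

Lemma psi_surj (lam : 'I_m.+1 -> K) :
  exists2 x, x \in A & forall a, psi a x = lam a :> K.
Proof.
have [x Bx phi_x] := phi_surj (peirce_end_endB (fun c d => if c == d then lam c *: 1 else 0)).
exists x => [|a]; last first.
  by rewrite psiE phi_x entry_peirce_end eqxx chi_corner linearZ /= chi1; apply: mulr1.
rewrite defA Bx phi_x !entry_peirce_end (negbTE (idx1_neq_idx2 i)) (eq_sym (idx2 m)).
by rewrite (negbTE (idx1_neq_idx2 i)) !mulr0 !mul0r linear0 eqxx.
Qed.

Lemma blown_rad : (A :&: \bigcap_(a : 'I_m.+1) lker (psi a))%VS = peirce_sub radB.
Proof.
apply/vspaceP => x; apply/memv_capP/peirce_subP => [[Ax /memv_bigcapP psi0] | [Bx ER]].
  have Bx := subvP subv_A_B' _ Ax; split=> // a b; apply: entry_radB => // eq_ab.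
  have [<-|] := eqVneq a b; last exact: chi_entry_A.
  by have := psi0 a; rewrite memv_ker psiE => /eqP.
have chi0 a b l : chi l (E x a b) = 0.
  by have := ER a b; rewrite memv_radB => /forallP/(_ l)/eqP.
split; first by rewrite defA Bx !chi0 eqxx.
by apply/memv_bigcapP => a; rewrite memv_ker psiE chi0.
Qed.

Lemma blown_basic_decomp : basic_decomp A psi.
Proof.
split=> [a | a | lam |]; [exact: psi_algid | exact: psiM | exact: psi_surj |].
apply: is_rad_characters psiM _; rewrite blown_rad.
by apply: nilpotent_peirce_sub; case: is_rad_radB.
Qed.

Lemma is_rad_blown R : is_rad B' R -> is_rad A R.
Proof.
move/is_rad_uniq/(_ is_rad_peirce_sub_radB)->; rewrite -blown_rad.
by case: blown_basic_decomp.
Qed.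

Definition blown_rho (x : L') : 'M[K]_2 :=
  \matrix_(r < 2, c < 2) (chi i (E x (ii i r) (ii i c)) : K).

Section Column.
Variable s : 'I_2.

Definition blown_col (x : L') : 'cV[K]_2 := \col_r (chi i (E x (ii i r) (ii i s)) : K).

Lemma blown_col_linear : linear blown_col.
Proof. by move=> k x y; apply/matrixP => r c; rewrite !mxE chi_entry_linear. Qed.

Lemma blown_col_mul b x : b \in B' -> x \in B' ->
  blown_col (b * x) = blown_rho b *m blown_col x.
Proof.
move=> Bb Bx; apply/matrixP => r c; rewrite !mxE entry_phiM // linear_sum /=.
rewrite (@sum_dbl_i _ i) => [|q neq_qi]; last first.
  by rewrite chiM chi_entry_off ?mul0r // dbl_ii eq_sym.
by apply: eq_bigr => q _; rewrite chiM !mxE.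
Qed.

Lemma blown_tensor : quot_module_iso B' (bal_tensor_ker B' A (psi (ii i s))) blown_rho.
Proof.
have colE := linfunE blown_col_linear.
have chi_scal (k : K) : chi i (e i * (k *: 1) * e i) = k.
  by rewrite chi_corner linearZ /= chi1; apply: mulr1.
apply: (quot_module_isoP subv_A_B' (f := linfun blown_col)) => [v | b x Bb Bx | a Aa | x Bx].
- pose M c d : B := if d == ii i s then (if c == ii i 0 then v 0 0 else v 1 0) *: 1 else 0.
  have [x Bx phi_x] := phi_surj (peirce_end_endB M).
  exists x => //; rewrite colE; apply/matrixP => r c.
  rewrite !mxE phi_x entry_peirce_end /M eqxx !dbl_ii chi_scal ord1 ii_eq.
  by case: (ord2P r) => ->.
- by rewrite !colE blown_col_mul.
- apply/matrixP => r c; rewrite !colE !mxE algid_A phi_algid entry_projP ii_eq dbl_ii psiE.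
  have [->|neq_rs] := eqVneq r s; first by rewrite dbl_ii che eqxx mulr1.
  rewrite linear0 mulr0 -{1}(dbl_ii i r) chi_entry_A ?dbl_ii ?ii_eq //.
- rewrite colE => /matrixP col0.
  have {}col0 r : chi i (E x (ii i r) (ii i s)) = 0 by have := col0 r 0; rewrite !mxE.
  have [eps Beps phi_eps] := phi_surj (unit_end_endB (ii i s) (ii i s)).
  have Exeps p q : E (x * eps) p q = if q == ii i s then E x p (ii i s) else 0.
    by rewrite phiM // phi_eps entry_comp_unit_end //; apply: phi_endB.
  have Aeps : eps \in A.
    rewrite defA Beps phi_eps -(ii0 i) -(ii1 i) !entry_unit_end !ii_eq.
    by case: (ord2P s) => ->; rewrite ?andbF ?linear0 eqxx.
  have psi_eps : psi (ii i s) eps = 1.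
    by rewrite psiE phi_eps entry_unit_end !eqxx dbl_ii e_idem che eqxx.
  have Axeps : x * eps \in A.
    rewrite defA memvM // -(ii0 i) -(ii1 i) !Exeps !ii_eq.
    by case: (ord2P s) col0 => -> col0; rewrite !eqxx /= ?col0 ?linear0 ?eqxx.
  have psi_xeps : psi (ii i s) (x * eps) = 0 by rewrite psiE Exeps eqxx dbl_ii col0.
  have -> : x = x * eps - x * (eps - (psi (ii i s) eps : K) *: algid A).
    by rewrite psi_eps scale1r algid_A mulrBr (algidr Bx) opprB addrC subrK.
  apply: memvB; first by apply: (bal_tensor_ker_psi0 subv_A_B' Axeps).
  by have := bal_tensor_ker_mul (psi (ii i s)) Bx Aeps.
Qed.

End Column.
End BlownUp.
End EndOfP.
End BlowUp.
End Basic.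

Unset Implicit Arguments.

Theorem proposition1p5 (K : closedFieldType) (B : falgType K) (m : nat)
    (chi : 'I_m -> 'Hom(B, K^o))
    (hB : basic_decomp {:B}%AS chi) :
  (* (1) gluing the components i and j *)
  (forall (i j : 'I_m), i != j ->
   forall A : {aspace B}, (A : {vspace B}) = lker (chi i - chi j) ->
   [/\ basic_decomp A (fun k : {k : 'I_m | k != j} => chi (val k)),
       forall R : {vspace B}, is_rad {:B}%AS R -> is_rad A R
     & quot_module_iso {:B}%AS (bal_tensor_ker {:B}%AS A (chi i))
         (fun b : B => diag_mx (\row_(r < 2)
            (if r == ord0 then (chi i b : K) else (chi j b : K))))])
  /\
  (* (2) blowing up the component i *)
  (forall (i : 'I_m) (e : 'I_m -> B),
   (forall k l, e k * e l = (if k == l then e k else 0)) ->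
   \sum_(k < m) e k = 1 ->
   (forall k l, chi l (e k) = (k == l)%:R :> K) ->
   forall (L' : falgType K) (B' : {aspace L'})
          (phi : 'Hom(L', 'End(Wsp B m))),
   is_End_of_P i e B' phi ->
   forall A : {aspace L'},
   (forall x, x \in A =
      [&& x \in B', chi i (entry i e (idx1 i) (idx2 m) (phi x)) == 0
                  & chi i (entry i e (idx2 m) (idx1 i) (phi x)) == 0]) ->
   let psi := fun a : 'I_m.+1 =>
     linfun (fun x : L' => (chi (dbl i a) (entry i e a a (phi x)) : K^o)) in
   let ii := fun r : 'I_2 => if r == ord0 then idx1 i else idx2 m in
   [/\ basic_decomp A psi,
       forall R : {vspace L'}, is_rad B' R -> is_rad A R
     & forall s : 'I_2,
         quot_module_iso B' (bal_tensor_ker B' A (psi (ii s)))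
           (fun x : L' => \matrix_(r < 2, c < 2)
              (chi i (entry i e (ii r) (ii c) (phi x)) : K))]).
Proof.
split=> [i j neq_ij A defA | i e eM _ che L' B' phi hphi A defA psi ii].
  split.
  - exact (glued_basic_decomp hB neq_ij defA).
  - exact (is_rad_glued hB neq_ij defA).
  exact (glued_tensor hB neq_ij defA).
split.
- exact (blown_basic_decomp hB eM che hphi defA).
- exact (is_rad_blown hB eM che hphi defA).
exact (blown_tensor hB eM che hphi defA).
Qed.
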